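(* There exist regular (up to a charged thin shell) spherically symmetric, asymptotically flat, non-time-symmetric and non-maximal initial data satisfying the dominant energy condition, with a ball $\mathcal{B}$ of area radius $\mathcal{R}$ outside which the data are electrovacuum with charge $Q$ and mass $M>|Q|$, having a horizon outside $\mathcal{B}$ of area radius $r_+=M+\sqrt{M^2-Q^2}$, and such that $2\mathcal{R}<|Q|$. In particular, inequality $2\mathcal{R}>|Q|$ can fail for a ball lying inside a horizon.
   Context: Spherically symmetric data: metric $dl^2+r(l)^2(d\theta^2+\sin^2\theta d\phi^2)$, second fundamental form $K_{ij}=n_in_jK_l+(h_{ij}-n_in_j)K_r$, $n=\partial_l$, trace $K=K_l+2K_r$ (maximal means $K=0$; time-symmetric means $K_{ij}=0$). Null expansions $\theta^\pm=\frac2r(r'\pm K_rr)$; a horizon is the outer boundary of a trapped region ($\theta^+\theta^-<0$) and satisfies $\theta^+\theta^-=0$. Asymptotic flatness: $h_{ij}=\delta_{ij}+O(r^{-1})$, $K_{ij}=O(r^{-2})$ with the corresponding derivative falloffs. Electrovacuum: only matter is the electric field $E=Q/r^2$. *)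

From Stdlib Require Import Reals Lra.
Open Scope R_scope.

Fixpoint CnOn (n : nat) (D : R -> Prop) (f : R -> R) : Prop :=
  match n with
  | O => forall x, D x -> continuity_pt f x
  | S n' => exists f', (forall x, D x -> derivable_pt_lim f x (f' x)) /\ CnOn n' D f'
  end.

Definition smooth_on (D : R -> Prop) (f : R -> R) : Prop := forall n, CnOn n D f.

Definition deriv_on (D : R -> Prop) (f f' : R -> R) : Prop :=
  forall x, D x -> derivable_pt_lim f x (f' x).

(* A smooth piece of spherically symmetric data, parametrized by the     *)
(* arclength l:   metric dl^2 + r(l)^2 dOmega^2,                          *)
(*   K_ij = n_i n_j Kl + (h_ij - n_i n_j) Kr,  radial electric field E.   *)
(* r1, r2, r3 are the l-derivatives of r; Kl1, Kr1 those of Kl, Kr.     *)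
Record SSPiece := mkSSPiece {
  r : R -> R; r1 : R -> R; r2 : R -> R; r3 : R -> R;
  Kl : R -> R; Kl1 : R -> R;
  Kr : R -> R; Kr1 : R -> R;
  Ef : R -> R
}.

Definition piece_ok (D : R -> Prop) (p : SSPiece) : Prop :=
  smooth_on D (r p) /\ smooth_on D (Kl p) /\ smooth_on D (Kr p) /\ smooth_on D (Ef p) /\
  deriv_on D (r p) (r1 p) /\ deriv_on D (r1 p) (r2 p) /\ deriv_on D (r2 p) (r3 p) /\
  deriv_on D (Kl p) (Kl1 p) /\ deriv_on D (Kr p) (Kr1 p).

(* Regularity at the centre l = 0: the data extend to (-a,a) with r, E odd,
   r'(0) = 1, Kl, Kr even and Kl(0) = Kr(0); for smooth functions this is
   exactly smoothness of h_ij, K_ij, E_i at the origin of R^3. *)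
Definition center_regular (a : R) (p : SSPiece) : Prop :=
  (forall x, -a < x < a -> r p (- x) = - r p x) /\
  r1 p 0 = 1 /\
  (forall x, -a < x < a -> Kl p (- x) = Kl p x) /\
  (forall x, -a < x < a -> Kr p (- x) = Kr p x) /\
  Kl p 0 = Kr p 0 /\
  (forall x, -a < x < a -> Ef p (- x) = - Ef p x).

(* Constraint equations:
   16 pi mu = R(h) + K^2 - |K|^2,   8 pi J_i = D^j K_ij - D_i K,
   with R(h) = (2/r^2)(1 - r'^2) - 4 r''/r. *)
Definition mu (p : SSPiece) (l : R) : R :=
  ((2 / (r p l)^2) * (1 - (r1 p l)^2) - 4 * r2 p l / r p l
   + 4 * Kl p l * Kr p l + 2 * (Kr p l)^2) / (16 * PI).

Definition Jrad (p : SSPiece) (l : R) : R :=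
  ((2 * r1 p l / r p l) * (Kl p l - Kr p l) - 2 * Kr1 p l) / (8 * PI).

(* energy density of the non-electromagnetic matter *)
Definition mu_matter (p : SSPiece) (l : R) : R := mu p l - (Ef p l)^2 / (8 * PI).

(* dominant energy condition (for the non-electromagnetic matter; the
   electric field carries no momentum density since B = 0) *)
Definition dec_bulk (p : SSPiece) (l : R) : Prop := Rabs (Jrad p l) <= mu_matter p l.

(* Thin shell at l = ls between inner piece pI and outer piece pO:
   surface energy density sigma = -[r']/(4 pi r), surface momentum
   j = -[Kr]/(4 pi)  (delta parts of the constraints). *)
Definition shell_sigma (pI pO : SSPiece) (ls : R) : R :=
  - (r1 pO ls - r1 pI ls) / (4 * PI * r pO ls).
Definition shell_j (pI pO : SSPiece) (ls : R) : R :=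
  - (Kr pO ls - Kr pI ls) / (4 * PI).
Definition dec_shell (pI pO : SSPiece) (ls : R) : Prop :=
  Rabs (shell_j pI pO ls) <= shell_sigma pI pO ls.

Definition theta_plus (p : SSPiece) (l : R) : R := 2 / r p l * (r1 p l + Kr p l * r p l).
Definition theta_minus (p : SSPiece) (l : R) : R := 2 / r p l * (r1 p l - Kr p l * r p l).
Definition thth (p : SSPiece) (l : R) : R := theta_plus p l * theta_minus p l.

(* lh is the outer boundary of a trapped region (theta+ theta- < 0) and
   theta+ theta- = 0 there. *)
(* lo: left end of the region where the piece p describes the data. *)
Definition horizon_at (p : SSPiece) (lo lh : R) : Prop :=
  thth p lh = 0 /\
  exists eps, 0 < eps /\ lo < lh - eps /\
    forall l, lh - eps < l < lh -> thth p l < 0.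

(* Asymptotic flatness, in the areal chart |x| = r (valid for l > l1 where
   r' > 0): h_ij - delta_ij = a(r) n_i n_j with a = 1/r'^2 - 1 and
   K_ij = b n_i n_j + Kr (delta_ij - n_i n_j) with b = Kl/r'^2;
   we require a = O_2(1/r), b, Kr = O_1(1/r^2), d/dr = (1/r') d/dl. *)
Definition asymp_flat (p : SSPiece) : Prop :=
  (forall N, exists L, forall l, L < l -> N < r p l) /\
  exists l1 C, forall l, l1 < l ->
    let rr := r p l in let v := r1 p l in let w := r2 p l in let z := r3 p l in
    0 < v /\
    Rabs (1 / v^2 - 1) <= C / rr /\
    Rabs (-2 * w / v^4) <= C / rr^2 /\
    Rabs ((-2 * z / v^4 + 8 * w^2 / v^5) / v) <= C / rr^3 /\
    Rabs (Kl p l / v^2) <= C / rr^2 /\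
    Rabs ((Kl1 p l / v^2 - 2 * Kl p l * w / v^3) / v) <= C / rr^3 /\
    Rabs (Kr p l) <= C / rr^2 /\
    Rabs (Kr1 p l / v) <= C / rr^3.

(* ADM mass: the ADM flux (1/16pi) \oint (d_j h_ij - d_i h_jj) dS^i in the
   areal chart equals (r/2)(1/r'^2 - 1); the mass is its limit. *)
Definition adm_mass (p : SSPiece) (M : R) : Prop :=
  forall eps, 0 < eps -> exists L, forall l, L < l ->
    Rabs (r p l / 2 * (1 / (r1 p l)^2 - 1) - M) < eps.

(* Outside a flat ball of area radius 2 take Reissner–Nordström data with M = 7, Q = 5 on
   the slice where r θ⁺/2 = r' + K_r r = 1.  In electrovacuum the Hamiltonian constraint says
   that the Misner–Sharp mass is M, i.e. r'² - K_r² r² = 1 - 2M/r + Q²/r², so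
   r' = 1 - M/r + Q²/(2r²), which is positive because M² < 2Q²; the momentum constraint then
   fixes K_l.  All fields are polynomials in 1/r and l(r) = ∫ dr/r' is elementary.  Glued at
   r = 2 to flat data, the data acquire a null-dust shell (σ = |j|); θ⁻ vanishes at
   r₊ = M + √(M² - Q²) and is negative just inside, while 2R = 4 < |Q| = 5. *)

From Stdlib Require Import Reals Lra ClassicalEpsilon Ranalysis5.
From Coquelicot Require Import Coquelicot.
Open Scope R_scope.

Lemma CnOn_S_weaken n D f : CnOn (S n) D f -> CnOn n D f.
Proof.
  revert D f; induction n as [|n IH]; intros D f [f' [Hd Hc]].
  - intros x Hx. apply derivable_continuous_pt. exists (f' x). exact (Hd x Hx).
  - exists f'. split; [exact Hd | exact (IH _ _ Hc)].
Qed.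

Lemma CnOn_const n D c : CnOn n D (fun _ => c).
Proof.
  revert c; induction n as [|n IH]; intros c.
  - intros x _. apply continuity_pt_const. intros ? ?; reflexivity.
  - exists (fun _ => 0). split; [intros x _; apply derivable_pt_lim_const | apply IH].
Qed.

Lemma CnOn_plus n D f g : CnOn n D f -> CnOn n D g -> CnOn n D (fun x => f x + g x).
Proof.
  revert D f g; induction n as [|n IH]; intros D f g Hf Hg.
  - intros x Hx. exact (continuity_pt_plus f g x (Hf x Hx) (Hg x Hx)).
  - destruct Hf as [f' [Hdf Hcf]], Hg as [g' [Hdg Hcg]].
    exists (fun x => f' x + g' x). split; [|exact (IH _ _ _ Hcf Hcg)].
    intros x Hx. exact (derivable_pt_lim_plus f g x _ _ (Hdf x Hx) (Hdg x Hx)).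
Qed.

Lemma CnOn_opp n D f : CnOn n D f -> CnOn n D (fun x => - f x).
Proof.
  revert D f; induction n as [|n IH]; intros D f Hf.
  - intros x Hx. exact (continuity_pt_opp f x (Hf x Hx)).
  - destruct Hf as [f' [Hdf Hcf]].
    exists (fun x => - f' x). split; [|exact (IH _ _ Hcf)].
    intros x Hx. exact (derivable_pt_lim_opp f x _ (Hdf x Hx)).
Qed.

Lemma CnOn_minus n D f g : CnOn n D f -> CnOn n D g -> CnOn n D (fun x => f x - g x).
Proof. intros Hf Hg. apply CnOn_plus; [exact Hf | exact (CnOn_opp _ _ _ Hg)]. Qed.

Lemma CnOn_mult n D f g : CnOn n D f -> CnOn n D g -> CnOn n D (fun x => f x * g x).
Proof.
  revert D f g; induction n as [|n IH]; intros D f g Hf Hg.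
  - intros x Hx. exact (continuity_pt_mult f g x (Hf x Hx) (Hg x Hx)).
  - pose proof (CnOn_S_weaken _ _ _ Hf) as Hf0.
    pose proof (CnOn_S_weaken _ _ _ Hg) as Hg0.
    destruct Hf as [f' [Hdf Hcf]], Hg as [g' [Hdg Hcg]].
    exists (fun x => f' x * g x + f x * g' x).
    split; [|apply CnOn_plus; apply IH; assumption].
    intros x Hx. exact (derivable_pt_lim_mult f g x _ _ (Hdf x Hx) (Hdg x Hx)).
Qed.

Lemma CnOn_pow n D f k : CnOn n D f -> CnOn n D (fun x => f x ^ k).
Proof.
  intros Hf. induction k as [|k IH]; [exact (CnOn_const n D 1) | exact (CnOn_mult _ _ _ _ Hf IH)].
Qed.

Ltac CnOn_poly H :=
  repeat first [ exact H | apply CnOn_const | apply CnOn_plus | apply CnOn_minus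
               | apply CnOn_opp | apply CnOn_mult | apply CnOn_pow ].

Lemma smooth_of_deriv n D f f' :
  (forall x, D x -> derivable_pt_lim f x (f' x)) -> CnOn n D f' -> CnOn (S n) D f.
Proof. intros Hd Hc. exists f'. split; assumption. Qed.

Section IncreasingInverse.

Variables (f f' : R -> R) (a : R).
Hypothesis f_deriv : forall t, derivable_pt_lim f t (f' t).
Hypothesis f'_pos : forall t, a <= t -> 0 < f' t.
Hypothesis f_unbounded : forall l, exists y, a <= y /\ l < f y.

Lemma incr_on_from x y : a <= x -> x < y -> f x < f y.
Proof.
  intros Hx Hxy.
  destruct (MVT_cor2 f f' x y Hxy (fun c _ => f_deriv c)) as [c [Hc Hxc]].
  pose proof (f'_pos c ltac:(lra)). nra.
Qed.

Lemma le_incr_on_from x y : a <= x -> x <= y -> f x <= f y.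
Proof.
  intros Hx Hxy. destruct (Req_dec x y) as [->|Hne]; [lra|].
  left. apply incr_on_from; lra.
Qed.

Definition inverse_from (l : R) : R := epsilon (inhabits a) (fun y => a <= y /\ f y = l).

Lemma inverse_fromP l : f a <= l -> a <= inverse_from l /\ f (inverse_from l) = l.
Proof.
  intros Hl. apply (epsilon_spec (inhabits a) (fun y => a <= y /\ f y = l)).
  destruct (Req_dec l (f a)) as [->|Hne]; [exists a; split; lra|].
  destruct (f_unbounded l) as [Y [HaY HY]].
  assert (HaltY : a < Y).
  { destruct (Req_dec a Y) as [<-|]; lra. }
  assert (Hcont : continuity (fun t => f t - l)).
  { apply continuity_minus; [|apply continuity_const; intros ? ?; reflexivity].
    apply derivable_continuous. exact (fun t => exist _ (f' t) (f_deriv t)). }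
  destruct (IVT (fun t => f t - l) a Y Hcont HaltY ltac:(lra) ltac:(lra))
    as [z [Hz Hfz]].
  exists z. split; lra.
Qed.

Lemma inverse_from_K y : a <= y -> inverse_from (f y) = y.
Proof.
  intros Hy. destruct (inverse_fromP (f y)) as [Ha Hf]; [apply le_incr_on_from; lra|].
  destruct (Rtotal_order (inverse_from (f y)) y) as [Hlt|[Heq|Hgt]]; [|exact Heq|].
  - pose proof (incr_on_from _ _ Ha Hlt). lra.
  - pose proof (incr_on_from _ _ Hy Hgt). lra.
Qed.

Lemma lt_inverse_from l y : a <= y -> f y < l -> y < inverse_from l.
Proof.
  intros Hy Hl. pose proof (le_incr_on_from a y ltac:(lra) Hy).
  destruct (inverse_fromP l) as [Ha Hf]; [lra|].
  destruct (Rlt_or_le y (inverse_from l)) as [|Hle]; [assumption|].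
  pose proof (le_incr_on_from _ _ Ha Hle). lra.
Qed.

Lemma inverse_from_lt l y : a <= y -> f a <= l -> l < f y -> inverse_from l < y.
Proof.
  intros Hy Hal Hl. destruct (inverse_fromP l) as [Ha Hf]; [lra|].
  destruct (Rlt_or_le (inverse_from l) y) as [|Hle]; [assumption|].
  pose proof (le_incr_on_from _ _ Hy Hle). lra.
Qed.

Lemma inverse_from_deriv l :
  f a < l -> derivable_pt_lim inverse_from l (1 / f' (inverse_from l)).
Proof.
  intros Hl. destruct (f_unbounded l) as [Y [HaY HY]].
  assert (HaltY : a < Y) by (destruct (Req_dec a Y) as [<-|]; lra).
  assert (Hrange : forall x, f a <= x <= f Y -> a <= inverse_from x <= Y).
  { intros x Hx. rewrite <- (inverse_from_K a), <- (inverse_from_K Y) by lra.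
    split.
    - destruct (Req_dec x (f a)) as [->|]; [lra|].
      rewrite inverse_from_K by lra. left. apply lt_inverse_from; lra.
    - destruct (Req_dec x (f Y)) as [->|]; [lra|].
      rewrite inverse_from_K by lra. left. apply inverse_from_lt; lra. }
  assert (Hcont : continuity_pt inverse_from l).
  { apply (continuity_pt_recip_interv f inverse_from a Y HaltY).
    - intros x y Hx Hxy _. apply incr_on_from; lra.
    - intros x Hx1 Hx2. apply inverse_fromP. exact Hx1.
    - intros x Hx1 Hx2. apply Hrange. lra.
    - intros t _. apply derivable_continuous_pt. exact (exist _ (f' t) (f_deriv t)).
    - lra. }
  assert (Hl_range : inverse_from (f a) <= inverse_from l <= inverse_from (f Y)).
  { rewrite !inverse_from_K by lra. apply Hrange. lra. }
  assert (Hne : f' (inverse_from l) <> 0).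
  { apply Rgt_not_eq, f'_pos. apply Hrange. lra. }
  exact (derivable_pt_lim_recip_interv f inverse_from (f a) (f Y) l
           (fun t _ => exist _ (f' t) (f_deriv t)) Hcont ltac:(lra) ltac:(lra) Hl_range
           (fun x Hx => proj2 (inverse_fromP x ltac:(lra))) Hne).
Qed.

End IncreasingInverse.

Definition slope (s : R) : R := 1 - 7 * s + 25 / 2 * s ^ 2.

Lemma slope_pos s : 0 < slope s.
Proof. unfold slope. pose proof (pow2_ge_0 (s - 7 / 25)). nra. Qed.

(* A primitive of 1 / slope (1 / t), normalised by arclen 2 = 2. *)
Definition arclen (t : R) : R :=
  t + 7 / 2 * (ln (2 * t ^ 2 - 14 * t + 25) - ln 5) + 24 * (atan (2 * t - 7) - atan (-3)).

Definition arclen' (t : R) : R := 2 * t ^ 2 / (2 * t ^ 2 - 14 * t + 25).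

Lemma arclen_denom_pos t : 0 < 2 * t ^ 2 - 14 * t + 25.
Proof. pose proof (pow2_ge_0 (t - 7 / 2)). nra. Qed.

Lemma arclen_deriv t : derivable_pt_lim arclen t (arclen' t).
Proof.
  pose proof (arclen_denom_pos t).
  apply is_derive_Reals. unfold arclen, arclen'. auto_derive.
  - lra.
  - field. split; nra.
Qed.

Lemma arclen'_pos t : 0 < t -> 0 < arclen' t.
Proof. intros Ht. pose proof (arclen_denom_pos t). apply Rdiv_lt_0_compat; nra. Qed.

Lemma arclen'_inv_slope t : 0 < t -> arclen' t = / slope (/ t).
Proof. intros Ht. pose proof (arclen_denom_pos t). unfold arclen', slope. field. lra. Qed.

Lemma arclen_2 : arclen 2 = 2.
Proof.
  unfold arclen. replace (2 * 2 ^ 2 - 14 * 2 + 25) with 5 by ring.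
  replace (2 * 2 - 7) with (-3) by ring. ring.
Qed.

Lemma arclen_ge t : 2 <= t -> t <= arclen t.
Proof.
  intros Ht. destruct (Req_dec t 2) as [->|Hne]; [rewrite arclen_2; lra|].
  destruct (MVT_cor2 arclen arclen' 2 t ltac:(lra) (fun c _ => arclen_deriv c))
    as [c [Hc Hc2]].
  assert (1 <= arclen' c).
  { pose proof (arclen_denom_pos c). unfold arclen'.
    apply Rmult_le_reg_r with (2 * c ^ 2 - 14 * c + 25); [lra|].
    unfold Rdiv. rewrite Rmult_assoc, Rinv_l by lra. nra. }
  rewrite arclen_2 in Hc. nra.
Qed.

Lemma arclen_unbounded l : exists y, 3 / 2 <= y /\ l < arclen y.
Proof.
  exists (Rmax l 2 + 1). pose proof (Rmax_l l 2). pose proof (Rmax_r l 2).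
  pose proof (arclen_ge (Rmax l 2 + 1)). split; lra.
Qed.

Lemma arclen_3_2_bounds : 0 < arclen (3 / 2) < 2.
Proof.
  destruct (MVT_cor2 arclen arclen' (3 / 2) 2 ltac:(lra) (fun c _ => arclen_deriv c))
    as [c [Hc Hc2]].
  rewrite arclen_2 in Hc.
  assert (0 < arclen' c <= 8 / 5).
  { pose proof (arclen_denom_pos c). split; [apply arclen'_pos; lra|].
    unfold arclen'. apply Rmult_le_reg_r with (2 * c ^ 2 - 14 * c + 25); [lra|].
    unfold Rdiv. rewrite Rmult_assoc, Rinv_l by lra.
    assert (0 <= (2 - c) * (50 / 3 - c)) by (apply Rmult_le_pos; lra). nra. }
  nra.
Qed.

Definition radius : R -> R := inverse_from arclen (3 / 2).

Definition inv_radius (l : R) : R := / radius l.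

Definition inv_radius_rate (s : R) : R := - s ^ 2 * slope s.

Lemma arclen'_pos_from t : 3 / 2 <= t -> 0 < arclen' t.
Proof. intros Ht. apply arclen'_pos. lra. Qed.

Lemma arclen_incr x y : 3 / 2 <= x -> x < y -> arclen x < arclen y.
Proof. exact (incr_on_from arclen arclen' _ arclen_deriv arclen'_pos_from x y). Qed.

Lemma radius_ge l : arclen (3 / 2) < l -> 3 / 2 <= radius l.
Proof.
  intros Hl. apply (inverse_fromP arclen arclen' (3 / 2) arclen_deriv arclen_unbounded). lra.
Qed.

Lemma radius_arclen t : 3 / 2 <= t -> radius (arclen t) = t.
Proof.
  exact (inverse_from_K arclen arclen' _ arclen_deriv arclen'_pos_from arclen_unbounded t).
Qed.

Lemma lt_radius l t : 3 / 2 <= t -> arclen t < l -> t < radius l.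
Proof.
  exact (lt_inverse_from arclen arclen' _ arclen_deriv arclen'_pos_from arclen_unbounded l t).
Qed.

Lemma radius_lt l t : 3 / 2 <= t -> arclen (3 / 2) <= l -> l < arclen t -> radius l < t.
Proof.
  exact (inverse_from_lt arclen arclen' _ arclen_deriv arclen'_pos_from arclen_unbounded l t).
Qed.

Lemma radius_2 : radius 2 = 2.
Proof. rewrite <- arclen_2 at 1. apply radius_arclen. lra. Qed.

Lemma radius_deriv l : arclen (3 / 2) < l -> derivable_pt_lim radius l (slope (inv_radius l)).
Proof.
  intros Hl. pose proof (radius_ge l Hl).
  replace (slope (inv_radius l)) with (1 / arclen' (radius l)).
  - exact (inverse_from_deriv arclen arclen' _ arclen_deriv arclen'_pos_from arclen_unbounded
             l Hl).
  - rewrite arclen'_inv_slope by lra. pose proof (slope_pos (/ radius l)).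
    unfold inv_radius. field. lra.
Qed.

Lemma inv_radius_deriv l :
  arclen (3 / 2) < l -> derivable_pt_lim inv_radius l (inv_radius_rate (inv_radius l)).
Proof.
  intros Hl. pose proof (radius_ge l Hl).
  apply is_derive_Reals. unfold inv_radius.
  replace (inv_radius_rate (/ radius l)) with (- slope (inv_radius l) / radius l ^ 2).
  - apply is_derive_inv; [apply is_derive_Reals, radius_deriv; exact Hl | lra].
  - unfold inv_radius_rate, inv_radius. field. lra.
Qed.

Lemma deriv_of_inv_radius (P P' : R -> R) l V :
  (forall s, is_derive P s (P' s)) -> arclen (3 / 2) < l ->
  P' (inv_radius l) * inv_radius_rate (inv_radius l) = V ->
  derivable_pt_lim (fun x => P (inv_radius x)) l V.
Proof.
  intros HP Hl <-.
  apply (derivable_pt_lim_comp inv_radius P l).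
  - apply inv_radius_deriv. exact Hl.
  - apply is_derive_Reals, HP.
Qed.

Lemma inv_radius_smooth n : CnOn n (fun x => arclen (3 / 2) < x) inv_radius.
Proof.
  induction n as [|n IH].
  - intros x Hx. apply derivable_continuous_pt. exists (inv_radius_rate (inv_radius x)).
    apply inv_radius_deriv. exact Hx.
  - apply (smooth_of_deriv _ _ _ (fun x => inv_radius_rate (inv_radius x)) inv_radius_deriv).
    unfold inv_radius_rate, slope. CnOn_poly IH.
Qed.

Lemma radius_smooth n : CnOn n (fun x => arclen (3 / 2) < x) radius.
Proof.
  destruct n as [|n].
  - intros x Hx. apply derivable_continuous_pt. exists (slope (inv_radius x)).
    apply radius_deriv. exact Hx.
  - apply (smooth_of_deriv _ _ _ (fun x => slope (inv_radius x)) radius_deriv).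
    pose proof (inv_radius_smooth n) as Hs. unfold slope. CnOn_poly Hs.
Qed.

Definition outer_r2 (s : R) : R := (7 * s ^ 2 - 25 * s ^ 3) * slope s.
Definition outer_r3 (s : R) : R :=
  ((-14 * s ^ 3 + 75 * s ^ 4) * slope s + (7 * s ^ 2 - 25 * s ^ 3) ^ 2) * slope s.
Definition outer_Kl (s : R) : R := -7 * s ^ 2 + 25 * s ^ 3.
Definition outer_Kl1 (s : R) : R := (14 * s ^ 3 - 75 * s ^ 4) * slope s.
Definition outer_Kr (s : R) : R := 7 * s ^ 2 - 25 / 2 * s ^ 3.
Definition outer_Kr1 (s : R) : R := (-14 * s ^ 3 + 75 / 2 * s ^ 4) * slope s.
Definition outer_E (s : R) : R := 5 * s ^ 2.

Definition outer_piece : SSPiece :=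
  mkSSPiece radius (fun l => slope (inv_radius l))
    (fun l => outer_r2 (inv_radius l)) (fun l => outer_r3 (inv_radius l))
    (fun l => outer_Kl (inv_radius l)) (fun l => outer_Kl1 (inv_radius l))
    (fun l => outer_Kr (inv_radius l)) (fun l => outer_Kr1 (inv_radius l))
    (fun l => outer_E (inv_radius l)).

Lemma outer_piece_ok : piece_ok (fun x => arclen (3 / 2) < x) outer_piece.
Proof.
  unfold piece_ok; cbn.
  repeat split; try (intro n; pose proof (inv_radius_smooth n) as Hs).
  - apply radius_smooth.
  - unfold outer_Kl. CnOn_poly Hs.
  - unfold outer_Kr. CnOn_poly Hs.
  - unfold outer_E. CnOn_poly Hs.
  - exact radius_deriv.
  - intros x Hx. apply (deriv_of_inv_radius _ (fun s => -7 + 25 * s)); [|exact Hx|].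
    + intro s. unfold slope. auto_derive; try exact I; field.
    + unfold outer_r2, inv_radius_rate. field.
  - intros x Hx.
    apply (deriv_of_inv_radius _ (fun s => (14 * s - 75 * s ^ 2) * slope s
                                      + (7 * s ^ 2 - 25 * s ^ 3) * (-7 + 25 * s)));
      [|exact Hx|].
    + intro s. unfold outer_r2, slope. auto_derive; try exact I; field.
    + unfold outer_r3, inv_radius_rate. field.
  - intros x Hx. apply (deriv_of_inv_radius _ (fun s => -14 * s + 75 * s ^ 2)); [|exact Hx|].
    + intro s. unfold outer_Kl. auto_derive; try exact I; field.
    + unfold outer_Kl1, inv_radius_rate. field.
  - intros x Hx. apply (deriv_of_inv_radius _ (fun s => 14 * s - 75 / 2 * s ^ 2)); [|exact Hx|].
    + intro s. unfold outer_Kr. auto_derive; try exact I; field.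
    + unfold outer_Kr1, inv_radius_rate. field.
Qed.

Lemma outer_electrovacuum l : arclen (3 / 2) < l ->
  Ef outer_piece l = 5 / (r outer_piece l) ^ 2 /\
  mu_matter outer_piece l = 0 /\ Jrad outer_piece l = 0.
Proof.
  intros Hl. pose proof (radius_ge l Hl) as Ht. pose proof PI_RGT_0.
  unfold mu_matter, mu, Jrad; cbn.
  unfold outer_E, outer_r2, outer_Kl, outer_Kr, outer_Kr1, inv_radius, slope.
  generalize (radius l) Ht; intros t Ht'.
  repeat split; field; lra.
Qed.

Lemma outer_trace l : Kl outer_piece l + 2 * Kr outer_piece l = 7 * inv_radius l ^ 2.
Proof. cbn. unfold outer_Kl, outer_Kr. field. Qed.

Lemma outer_thth l : arclen (3 / 2) < l ->
  thth outer_piece l = 4 * (radius l ^ 2 - 14 * radius l + 25) / radius l ^ 4.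
Proof.
  intros Hl. pose proof (radius_ge l Hl) as Ht.
  unfold thth, theta_plus, theta_minus; cbn. unfold outer_Kr, inv_radius, slope.
  generalize (radius l) Ht; intros t Ht'. field. lra.
Qed.

Lemma outer_horizon :
  let rp := 7 + sqrt (7 ^ 2 - 5 ^ 2) in
  2 < arclen rp /\ horizon_at outer_piece 2 (arclen rp) /\ r outer_piece (arclen rp) = rp.
Proof.
  intros rp. set (q := sqrt (7 ^ 2 - 5 ^ 2)) in rp.
  assert (Hq2 : q * q = 24) by (unfold q; rewrite sqrt_sqrt; lra).
  assert (Hq : 0 < q) by (unfold q; apply sqrt_lt_R0; lra).
  assert (H27 : 2 < arclen 7) by (rewrite <- arclen_2 at 1; apply arclen_incr; lra).
  assert (H7rp : arclen 7 < arclen rp) by (apply arclen_incr; unfold rp; lra).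
  pose proof arclen_3_2_bounds.
  assert (Hr : radius (arclen rp) = rp) by (apply radius_arclen; unfold rp; lra).
  split; [lra|]. split; [|exact Hr].
  split.
  - rewrite outer_thth by lra. rewrite Hr. unfold rp.
    replace ((7 + q) ^ 2 - 14 * (7 + q) + 25) with (q * q - 24) by ring.
    rewrite Hq2. unfold Rdiv. ring.
  - exists (arclen rp - arclen 7). split; [lra|]. split; [lra|].
    intros l Hl. rewrite outer_thth by lra.
    assert (A : 7 < radius l) by (apply lt_radius; lra).
    assert (B : radius l < rp) by (apply radius_lt; [unfold rp | |]; lra).
    unfold rp in B.
    assert (radius l ^ 2 - 14 * radius l + 25 < 0) by nra.
    unfold Rdiv. apply Rmult_neg_pos; [lra|].
    apply Rinv_0_lt_compat, pow_lt. lra.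
Qed.

Definition flat_piece : SSPiece :=
  mkSSPiece (fun l => l) (fun _ => 1) (fun _ => 0) (fun _ => 0)
    (fun _ => 0) (fun _ => 0) (fun _ => 0) (fun _ => 0) (fun _ => 0).

Lemma flat_piece_ok (D : R -> Prop) : piece_ok D flat_piece.
Proof.
  assert (Hid : forall n, CnOn n D (fun x => x)).
  { intros [|n].
    - intros x _. apply derivable_continuous_pt, derivable_pt_id.
    - apply (smooth_of_deriv _ _ _ (fun _ => 1)); [intros x _; apply derivable_pt_lim_id|].
      apply CnOn_const. }
  unfold piece_ok; cbn.
  repeat split; try (intro n; apply CnOn_const); try exact Hid;
    intros x _; first [apply derivable_pt_lim_id | apply derivable_pt_lim_const].
Qed.

Lemma flat_center_regular a : center_regular a flat_piece.
Proof. unfold center_regular; cbn. repeat split; intros; ring. Qed.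

Lemma flat_vacuum l : 0 < l -> mu_matter flat_piece l = 0 /\ Jrad flat_piece l = 0.
Proof.
  intros Hl. pose proof PI_RGT_0.
  unfold mu_matter, mu, Jrad; cbn. split; field; lra.
Qed.

Lemma inv_radius_2 : inv_radius 2 = 1 / 2.
Proof. unfold inv_radius. rewrite radius_2. field. Qed.

(* The jumps of r' and K_r at the shell are -3/8 and 3/16. *)
Lemma flat_outer_dec_shell : dec_shell flat_piece outer_piece 2.
Proof.
  unfold dec_shell, shell_j, shell_sigma; cbn.
  rewrite inv_radius_2, radius_2. pose proof PI_RGT_0. unfold slope, outer_Kr.
  replace (- (7 * (1 / 2) ^ 2 - 25 / 2 * (1 / 2) ^ 3 - 0) / (4 * PI))
    with (- (3 / (64 * PI))) by (field; lra).
  replace (- (1 - 7 * (1 / 2) + 25 / 2 * (1 / 2) ^ 2 - 1) / (4 * PI * 2))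
    with (3 / (64 * PI)) by (field; lra).
  rewrite Rabs_Ropp, Rabs_right; [lra|].
  left. apply Rdiv_lt_0_compat; lra.
Qed.

Lemma Rabs_monomial_quotient_le X s k N v j B C :
  0 < s -> X = s ^ k * (N / v ^ j) -> 1 / 2 <= v -> Rabs N <= B -> B * 2 ^ j <= C ->
  Rabs X <= C * s ^ k.
Proof.
  intros Hs -> Hv HN HB.
  assert (Hvj : 0 < v ^ j) by (apply pow_lt; lra).
  assert (Hinv : / v ^ j <= 2 ^ j).
  { replace (2 ^ j) with (/ (/ 2) ^ j) by (rewrite pow_inv, Rinv_inv; reflexivity).
    apply Rinv_le_contravar; [apply pow_lt; lra | apply pow_incr; lra]. }
  assert (HN' : Rabs (N / v ^ j) <= C).
  { unfold Rdiv. rewrite Rabs_mult, Rabs_inv, (Rabs_right (v ^ j)) by lra.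
    pose proof (Rabs_pos N).
    apply Rle_trans with (B * 2 ^ j); [|exact HB].
    apply Rmult_le_compat; try lra. left. apply Rinv_0_lt_compat. lra. }
  rewrite Rabs_mult, (Rabs_right (s ^ k)) by (apply Rle_ge, pow_le; lra).
  rewrite Rmult_comm. apply Rmult_le_compat_r; [apply pow_le; lra | exact HN'].
Qed.

Section Decay.

Variable s : R.
Hypothesis s_small : 0 < s < 1 / 14.

Let slope_range : 1 / 2 <= slope s <= 1.
Proof. unfold slope. split; nra. Qed.

Let slope_neq0 : slope s <> 0.
Proof. lra. Qed.

Lemma outer_decay :
  Rabs (1 / slope s ^ 2 - 1) <= 1000 * s ^ 1 /\
  Rabs (-2 * outer_r2 s / slope s ^ 4) <= 1000 * s ^ 2 /\
  Rabs ((-2 * outer_r3 s / slope s ^ 4 + 8 * outer_r2 s ^ 2 / slope s ^ 5) / slope s)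
    <= 1000 * s ^ 3 /\
  Rabs (outer_Kl s / slope s ^ 2) <= 1000 * s ^ 2 /\
  Rabs ((outer_Kl1 s / slope s ^ 2 - 2 * outer_Kl s * outer_r2 s / slope s ^ 3) / slope s)
    <= 1000 * s ^ 3 /\
  Rabs (outer_Kr s) <= 1000 * s ^ 2 /\
  Rabs (outer_Kr1 s / slope s) <= 1000 * s ^ 3.
Proof.
  pose proof slope_range. pose proof slope_neq0.
  unfold outer_r2, outer_r3, outer_Kl, outer_Kl1, outer_Kr, outer_Kr1.
  repeat split.
  - apply (Rabs_monomial_quotient_le _ s 1 ((7 - 25 / 2 * s) * (2 - 7 * s + 25 / 2 * s ^ 2))
             (slope s) 2 14);
      [lra | | lra | | lra].
    + unfold slope in *. field; lra.
    + apply Rabs_le. split; nra.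
  - apply (Rabs_monomial_quotient_le _ s 2 (-2 * (7 - 25 * s)) (slope s) 3 14);
      [lra | | lra | | lra].
    + field; lra.
    + apply Rabs_le. split; nra.
  - apply (Rabs_monomial_quotient_le _ s 3
             (2 * (14 - 75 * s) * slope s + 6 * s * (7 - 25 * s) ^ 2) (slope s) 4 50);
      [lra | | lra | | lra].
    + unfold slope in *. field; lra.
    + apply Rabs_le. unfold slope. split; nra.
  - apply (Rabs_monomial_quotient_le _ s 2 (-7 + 25 * s) (slope s) 2 7);
      [lra | | lra | | lra].
    + field; lra.
    + apply Rabs_le. split; nra.
  - apply (Rabs_monomial_quotient_le _ s 3
             ((14 - 75 * s) * slope s + 2 * s * (7 - 25 * s) ^ 2) (slope s) 3 21);
      [lra | | lra | | lra].
    + unfold slope in *. field; lra.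
    + apply Rabs_le. unfold slope. split; nra.
  - apply (Rabs_monomial_quotient_le _ s 2 (7 - 25 / 2 * s) (slope s) 0 7);
      [lra | | lra | | lra].
    + field; lra.
    + apply Rabs_le. split; nra.
  - apply (Rabs_monomial_quotient_le _ s 3 (-14 + 75 / 2 * s) (slope s) 0 14);
      [lra | | lra | | lra].
    + field; lra.
    + apply Rabs_le. split; nra.
Qed.

Lemma outer_mass_decay : Rabs (/ s / 2 * (1 / slope s ^ 2 - 1) - 7) <= 1000 * s ^ 1.
Proof.
  pose proof slope_range. pose proof slope_neq0.
  apply (Rabs_monomial_quotient_le _ s 1
           ((122 - 861 * s + 9175 / 4 * s ^ 2 - 4375 / 2 * s ^ 3) / 2) (slope s) 2 100);
    [lra | | lra | | lra].
  - unfold slope in *. field; lra.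
  - apply Rabs_le. split; nra.
Qed.

End Decay.

Lemma inv_radius_small l : 14 < radius l -> 0 < inv_radius l < 1 / 14.
Proof.
  intros Hl. unfold inv_radius. split.
  - apply Rinv_0_lt_compat. lra.
  - rewrite Rdiv_1_l. apply Rinv_lt_contravar; lra.
Qed.

Lemma outer_asymp_flat : asymp_flat outer_piece.
Proof.
  split.
  - intros N. exists (arclen (Rmax N 2)). intros l Hl. cbn.
    pose proof (Rmax_l N 2). pose proof (Rmax_r N 2).
    pose proof (lt_radius l (Rmax N 2) ltac:(lra) Hl). lra.
  - exists (arclen 14), 1000. intros l Hl.
    cbn [r r1 r2 r3 Kl Kl1 Kr Kr1 outer_piece].
    pose proof (inv_radius_small l (lt_radius l 14 ltac:(lra) Hl)) as Hs.
    assert (Hk : forall k, 1000 / radius l ^ k = 1000 * inv_radius l ^ k).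
    { intros k. unfold inv_radius, Rdiv. rewrite pow_inv. reflexivity. }
    replace (1000 / radius l) with (1000 * inv_radius l ^ 1)
      by (unfold inv_radius, Rdiv; rewrite pow_1; reflexivity).
    rewrite !Hk. split; [apply slope_pos | exact (outer_decay _ Hs)].
Qed.

Lemma outer_adm_mass : adm_mass outer_piece 7.
Proof.
  intros eps Heps. exists (arclen (Rmax 14 (1000 / eps))). intros l Hl. cbn.
  pose proof (Rmax_l 14 (1000 / eps)). pose proof (Rmax_r 14 (1000 / eps)).
  pose proof (lt_radius l (Rmax 14 (1000 / eps)) ltac:(lra) Hl) as Hr.
  pose proof (outer_mass_decay _ (inv_radius_small l ltac:(lra))) as Hm.
  unfold inv_radius in Hm. rewrite Rinv_inv in Hm.
  eapply Rle_lt_trans; [exact Hm|]. rewrite pow_1.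
  apply Rmult_lt_reg_r with (radius l); [lra|].
  rewrite Rmult_assoc, Rinv_l by lra.
  apply Rmult_lt_reg_r with (/ eps); [apply Rinv_0_lt_compat; lra|].
  replace (eps * radius l * / eps) with (radius l) by (field; lra). lra.
Qed.

Theorem theorem1 :
  exists (pI pO : SSPiece) (a b ls lB Q M : R),
    0 < b /\ b < ls /\ ls < a /\ ls <= lB /\
    piece_ok (fun x => - a < x < a) pI /\
    piece_ok (fun x => b < x) pO /\
    center_regular a pI /\
    (forall l, 0 < l <= ls -> 0 < r pI l) /\
    (forall l, ls <= l -> 0 < r pO l) /\
    r pO ls = r pI ls /\
    (forall l, 0 < l < ls -> dec_bulk pI l) /\
    (forall l, ls < l -> dec_bulk pO l) /\
    dec_shell pI pO ls /\
    (forall l, lB < l ->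
       Ef pO l = Q / (r pO l)^2 /\ mu_matter pO l = 0 /\ Jrad pO l = 0) /\
    asymp_flat pO /\ adm_mass pO M /\ Rabs Q < M /\
    ((exists l, 0 < l < ls /\ (Kl pI l <> 0 \/ Kr pI l <> 0)) \/
     (exists l, ls < l /\ (Kl pO l <> 0 \/ Kr pO l <> 0))) /\
    ((exists l, 0 < l < ls /\ Kl pI l + 2 * Kr pI l <> 0) \/
     (exists l, ls < l /\ Kl pO l + 2 * Kr pO l <> 0)) /\
    (exists lh, lB < lh /\ horizon_at pO ls lh /\
       r pO lh = M + sqrt (M^2 - Q^2)) /\
    2 * r pO lB < Rabs Q.
Proof.
  pose proof arclen_3_2_bounds as Hb.
  assert (Habs : Rabs 5 = 5) by (apply Rabs_right; lra).
  assert (Htrace : Kl outer_piece 3 + 2 * Kr outer_piece 3 <> 0).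
  { rewrite outer_trace. pose proof (radius_ge 3 ltac:(lra)).
    unfold inv_radius. apply Rmult_integral_contrapositive_currified; [lra|].
    apply pow_nonzero, Rinv_neq_0_compat. lra. }
  destruct outer_horizon as [Hlh [Hhor Hrp]].
  exists flat_piece, outer_piece, 3, (arclen (3 / 2)), 2, 2, 5, 7.
  do 4 (split; [lra|]).
  split; [apply flat_piece_ok|]. split; [exact outer_piece_ok|].
  split; [apply flat_center_regular|].
  split; [intros l Hl; cbn; lra|].
  split; [intros l Hl; pose proof (radius_ge l ltac:(lra)); cbn; lra|].
  split; [exact radius_2|].
  split; [intros l Hl; unfold dec_bulk; destruct (flat_vacuum l ltac:(lra)) as [-> ->];
          rewrite Rabs_R0; lra|].
  split; [intros l Hl; unfold dec_bulk; destruct (outer_electrovacuum l ltac:(lra)) as [_ [-> ->]];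
          rewrite Rabs_R0; lra|].
  split; [exact flat_outer_dec_shell|].
  split; [intros l Hl; apply outer_electrovacuum; lra|].
  split; [exact outer_asymp_flat|]. split; [exact outer_adm_mass|].
  split; [rewrite Habs; lra|].
  split.
  { right. exists 3. split; [lra|].
    destruct (Req_dec (Kl outer_piece 3) 0) as [E|E]; [right|left; exact E].
    intros E2. apply Htrace. rewrite E, E2. ring. }
  split; [right; exists 3; split; [lra | exact Htrace]|].
  split; [exists (arclen (7 + sqrt (7 ^ 2 - 5 ^ 2))); auto|].
  cbn. rewrite radius_2, Habs. lra.
Qed.
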